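(* Let $\kappa$ be an uncountable regular cardinal and let $\mathcal{I}$ be a $\kappa$-complete proper ideal on $\kappa$ containing every bounded subset of $\kappa$ and having a basis of size $\kappa$. Let $\langle B_\alpha:\alpha<\kappa\rangle$ be an approximation sequence of $\mathcal{I}$, and let $A\subseteq\kappa$ be unbounded. If $f\colon{}^{\kappa}\kappa\to{}^{\kappa}\kappa$ is $A$-recursive over $\langle B_\alpha:\alpha<\kappa\rangle$, then $f$ is continuous with respect to $\tau_{\mathcal{I}}$ on both sides.
   Context: A basis for $\mathcal{I}$ is a family $\mathcal{B}\subseteq\mathcal{I}$ such that every member of $\mathcal{I}$ is contained in a member of $\mathcal{B}$. An approximation sequence of $\mathcal{I}$ is a sequence $\langle B_\alpha:\alpha<\kappa\rangle$ of members of $\mathcal{I}$ with $B_0=\emptyset$, $B_\alpha\subsetneq B_\beta$ for $\alpha<\beta$, $B_\alpha=\bigcup_{\beta<\alpha}B_\beta$ for limit $\alpha$, and such that every $B\in\mathcal{I}$ satisfies $B\subsetneq B_\alpha$ for some $\alpha$. $\mathrm{Fn}_{\mathcal{I}}$ is the set of functions $D\to\kappa$ with $D\in\mathcal{I}$; $\tau_{\mathcal{I}}$ on ${}^{\kappa}\kappa$ is generated by the sets $\mathbf{N}_g=\{x:g\subseteq x\}$, $g\in\mathrm{Fn}_{\mathcal{I}}$. $H\colon\mathrm{Fn}_{\mathcal{I}}\to\mathrm{Fn}_{\mathcal{I}}$ is monotone if $g\subseteq h$ implies $H(g)\subseteq H(h)$. $f$ is $A$-recursive over $\langle B_\alpha\rangle$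 if there is a monotone $H\colon\mathrm{Fn}_{\mathcal{I}}\to\mathrm{Fn}_{\mathcal{I}}$ such that for every $\alpha\in A$ and every $x\in{}^{\kappa}\kappa$, $f(x)(\theta)=H(x\restriction B_\alpha)(\theta)$ for all $\theta\in B_{\alpha'}\cup(A\cap\alpha')$, where $\alpha'=\min(A\setminus(\alpha+1))$. *)

(* kappa is modelled as a type K carrying a strict well-order
   [lt] whose order type is an uncountable regular cardinal. *)

Definition pset (T : Type) := T -> Prop.

Definition subset {T : Type} (X Y : pset T) : Prop := forall x, X x -> Y x.
Definition psubset {T : Type} (X Y : pset T) : Prop :=
  subset X Y /\ exists x, Y x /\ ~ X x.

Definition injective {A B : Type} (f : A -> B) : Prop :=
  forall x y, f x = f y -> x = y.

Definition card_lt (J K : Type) : Prop :=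
  (exists f : J -> K, injective f) /\ ~ (exists g : K -> J, injective g).

Definition le {K : Type} (lt : K -> K -> Prop) (a b : K) : Prop := lt a b \/ a = b.

Definition strict_wellorder {K : Type} (lt : K -> K -> Prop) : Prop :=
  (forall a, ~ lt a a) /\
  (forall a b c, lt a b -> lt b c -> lt a c) /\
  (forall a b, lt a b \/ a = b \/ lt b a) /\
  well_founded lt.

(* the order type is a cardinal: every proper initial segment is smaller *)
Definition is_cardinal {K : Type} (lt : K -> K -> Prop) : Prop :=
  forall a : K, card_lt {b : K | lt b a} K.

Definition uncountable (K : Type) : Prop :=
  ~ (exists g : K -> nat, injective g).

Definition bounded {K : Type} (lt : K -> K -> Prop) (X : pset K) : Prop :=
  exists a, forall b, X b -> lt b a.

Definition regular {K : Type} (lt : K -> K -> Prop) : Prop :=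
  forall X : pset K, card_lt {x : K | X x} K -> bounded lt X.

Definition is_limit {K : Type} (lt : K -> K -> Prop) (a : K) : Prop :=
  (exists b, lt b a) /\ (forall b, lt b a -> exists c, lt b c /\ lt c a).

Definition is_ideal {K : Type} (I : pset (pset K)) : Prop :=
  I (fun _ => False) /\
  (forall X Y, I Y -> subset X Y -> I X) /\
  (forall X Y, I X -> I Y -> I (fun x => X x \/ Y x)).

Definition kappa_complete {K : Type} (I : pset (pset K)) : Prop :=
  forall (J : Type) (F : J -> pset K),
    card_lt J K -> (forall j, I (F j)) -> I (fun x => exists j, F j x).

Definition proper_ideal {K : Type} (I : pset (pset K)) : Prop :=
  ~ I (fun _ => True).

Definition contains_bounded {K : Type} (lt : K -> K -> Prop) (I : pset (pset K)) : Prop :=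
  forall X, bounded lt X -> I X.

Definition is_basis {K : Type} (I : pset (pset K)) (Bs : pset (pset K)) : Prop :=
  (forall B, Bs B -> I B) /\ (forall X, I X -> exists B, Bs B /\ subset X B).

Definition has_basis_of_size_kappa {K : Type} (I : pset (pset K)) : Prop :=
  exists b : K -> pset K, injective b /\ is_basis I (fun B => exists a, b a = B).

Definition approximation_sequence {K : Type} (lt : K -> K -> Prop)
    (I : pset (pset K)) (B : K -> pset K) : Prop :=
  (forall a, I (B a)) /\
  (forall z, (forall a, le lt z a) -> forall x, ~ B z x) /\
  (forall a b, lt a b -> psubset (B a) (B b)) /\
  (forall a, is_limit lt a -> forall x, B a x <-> exists b, lt b a /\ B b x) /\
  (forall X, I X -> exists a, psubset X (B a)).

Definition pfun (K : Type) := K -> option K.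

Definition dom {K : Type} (g : pfun K) : pset K := fun t => g t <> None.

Definition in_Fn {K : Type} (I : pset (pset K)) (g : pfun K) : Prop := I (dom g).

Definition psub {K : Type} (g h : pfun K) : Prop :=
  forall t v, g t = Some v -> h t = Some v.

Definition N {K : Type} (g : pfun K) : pset (K -> K) :=
  fun x => forall t v, g t = Some v -> x t = v.

Definition is_restriction {K : Type} (x : K -> K) (D : pset K) (r : pfun K) : Prop :=
  forall t, (D t -> r t = Some (x t)) /\ (~ D t -> r t = None).

Definition is_topology {X : Type} (T : pset (pset X)) : Prop :=
  T (fun _ => True) /\
  (forall U V, T U -> T V -> T (fun x => U x /\ V x)) /\
  (forall F : pset (pset X), (forall U, F U -> T U) -> T (fun x => exists U, F U /\ U x)).

Definition tau_open {K : Type} (I : pset (pset K)) (U : pset (K -> K)) : Prop :=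
  forall T : pset (pset (K -> K)), is_topology T ->
    (forall g, in_Fn I g -> T (N g)) -> T U.

Definition tau_continuous {K : Type} (I : pset (pset K)) (f : (K -> K) -> (K -> K)) : Prop :=
  forall U, tau_open I U -> tau_open I (fun x => U (f x)).

Definition A_recursive {K : Type} (lt : K -> K -> Prop) (I : pset (pset K))
    (B : K -> pset K) (A : pset K) (f : (K -> K) -> (K -> K)) : Prop :=
  exists H : pfun K -> pfun K,
    (forall g, in_Fn I g -> in_Fn I (H g)) /\
    (forall g h, in_Fn I g -> in_Fn I h -> psub g h -> psub (H g) (H h)) /\
    (forall a a', A a -> A a' -> lt a a' ->
       (* a' = min (A \ (a+1)) *)
       (forall c, A c -> lt a c -> le lt a' c) ->
       forall (x : K -> K) (r : pfun K), is_restriction x (B a) r ->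
       forall t, (B a' t \/ (A t /\ lt t a')) -> H r t = Some (f x t)).

From Stdlib Require Import Classical ClassicalEpsilon FunctionalExtensionality PropExtensionality.

(* An A-recursive f computes f x on B_α' from x restricted to B_α, where α' is
   the successor of α in A. Every member of I lies inside some B_β, and A is
   unbounded, so for each g in Fn_I the values of f x on dom g depend only on x
   restricted to a single member of I. That restriction is a basic τ_I-open set
   around x mapped by f into N_g, which is continuity. *)

Definition agree_on {K : Type} (D : pset K) (x y : K -> K) : Prop :=
  forall t, D t -> x t = y t.

Definition restrict {K : Type} (x : K -> K) (D : pset K) : pfun K :=
  fun t => if excluded_middle_informative (D t) then Some (x t) else None.

Lemma restrict_is_restriction {K : Type} (x : K -> K) (D : pset K) :
  is_restriction x D (restrict x D).
Proof.
  intro t; unfold restrict.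
  destruct (excluded_middle_informative (D t)); split; intro; tauto.
Qed.

Lemma dom_restrict {K : Type} (x : K -> K) (D : pset K) :
  subset (dom (restrict x D)) D.
Proof.
  intros t Ht; unfold dom, restrict in Ht.
  destruct (excluded_middle_informative (D t)); [assumption | contradiction].
Qed.

Lemma N_restrict {K : Type} (x y : K -> K) (D : pset K) :
  N (restrict x D) y <-> agree_on D y x.
Proof.
  unfold N, restrict; split.
  - intros Hy t Ht; apply Hy.
    destruct (excluded_middle_informative (D t)); [reflexivity | contradiction].
  - intros Hxy t v Hv.
    destruct (excluded_middle_informative (D t)) as [Ht|]; [|discriminate].
    injection Hv as <-; exact (Hxy t Ht).
Qed.

Lemma restrict_agree {K : Type} (x y : K -> K) (D : pset K) :
  agree_on D x y -> restrict x D = restrict y D.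
Proof.
  intro Hxy; apply functional_extensionality; intro t; unfold restrict.
  destruct (excluded_middle_informative (D t)) as [Ht|]; [now rewrite (Hxy t Ht) | reflexivity].
Qed.

Lemma is_topology_preimage {X Y : Type} (f : X -> Y) (T : pset (pset X)) :
  is_topology T -> is_topology (fun V : pset Y => T (fun x => V (f x))).
Proof.
  intros [HT [HTI HTU]]; split; [exact HT | split].
  - intros U V; apply HTI.
  - intros F HF.
    set (G := fun W : pset X => exists V, F V /\ W = (fun x => V (f x))).
    assert (E : (fun x => exists V, F V /\ V (f x)) = (fun x => exists W, G W /\ W x)).
    { apply functional_extensionality; intro x; apply propositional_extensionality; split.
      - intros [V [HV Hx]]; exists (fun x => V (f x)); split; [now exists V | exact Hx].
      - intros [W [[V [HV ->]] Hx]]; now exists V. }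
    rewrite E; apply HTU; intros W [V [HV ->]]; exact (HF V HV).
Qed.

Section Topology.

Variables (K : Type) (I : pset (pset K)).

Lemma tau_open_of_local (U : pset (K -> K)) :
  (forall x, U x -> exists h, in_Fn I h /\ N h x /\ subset (N h) U) -> tau_open I U.
Proof.
  intros Hloc T [HT [HTI HTU]] HN.
  set (G := fun W => exists h, in_Fn I h /\ W = N h /\ subset (N h) U).
  assert (E : U = (fun x => exists W, G W /\ W x)).
  { apply functional_extensionality; intro x; apply propositional_extensionality; split.
    - intro Hx; destruct (Hloc x Hx) as [h [Hh [Hxh HhU]]].
      exists (N h); split; [now exists h | exact Hxh].
    - intros [W [[h [_ [-> HhU]]] Hx]]; exact (HhU x Hx). }
  rewrite E; apply HTU; intros W [h [Hh [-> _]]]; exact (HN h Hh).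
Qed.

Lemma tau_continuous_of_basic (f : (K -> K) -> (K -> K)) :
  (forall g, in_Fn I g -> tau_open I (fun x => N g (f x))) -> tau_continuous I f.
Proof.
  intros Hbasic U HU T HT HN.
  apply (HU (fun V => T (fun x => V (f x)))).
  - exact (is_topology_preimage f T HT).
  - intros g Hg; exact (Hbasic g Hg T HT HN).
Qed.

Hypothesis Hdown : forall X Y, I Y -> subset X Y -> I X.

Lemma tau_continuous_of_local_dependence (f : (K -> K) -> (K -> K)) :
  (forall D, I D -> exists E, I E /\
     forall x y, agree_on E x y -> agree_on D (f x) (f y)) ->
  tau_continuous I f.
Proof.
  intro Hdep; apply tau_continuous_of_basic; intros g Hg.
  apply tau_open_of_local; intros x Hx.
  destruct (Hdep (dom g) Hg) as [E [HE HEg]].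
  exists (restrict x E); split; [|split].
  - exact (Hdown _ _ HE (dom_restrict x E)).
  - apply N_restrict; intros t _; reflexivity.
  - intros y Hy t v Hgt.
    rewrite (HEg y x (proj1 (N_restrict x y E) Hy) t); [exact (Hx t v Hgt) |].
    unfold dom; rewrite Hgt; discriminate.
Qed.

End Topology.

Section WellOrder.

Variables (K : Type) (lt : K -> K -> Prop).
Hypothesis Hwo : strict_wellorder lt.

Lemma not_lt_le (a b : K) : ~ lt b a -> le lt a b.
Proof.
  destruct Hwo as [_ [_ [Htri _]]]; intro Hba.
  destruct (Htri a b) as [Hab | [-> | Hba']]; [now left | now right | contradiction].
Qed.

Lemma lt_le_trans (a b c : K) : lt a b -> le lt b c -> lt a c.
Proof.
  destruct Hwo as [_ [Htr _]]; intros Hab [Hbc | <-]; [exact (Htr _ _ _ Hab Hbc) | exact Hab].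
Qed.

Lemma exists_least (P : K -> Prop) :
  (exists c, P c) -> exists m, P m /\ forall c, P c -> le lt m c.
Proof.
  destruct Hwo as [_ [_ [_ Hwf]]]; intros [c Hc].
  apply NNPP; intro Hnone.
  revert Hc; induction (Hwf c) as [c _ IH]; intro Hc.
  apply Hnone; exists c; split; [exact Hc |].
  intros d Hd; apply not_lt_le; intro Hdc; exact (IH d Hdc Hd).
Qed.

Section Approximation.

Variables (I : pset (pset K)) (B : K -> pset K).
Hypothesis Happrox : approximation_sequence lt I B.

Lemma approx_mono (a b : K) : le lt a b -> subset (B a) (B b).
Proof.
  destruct Happrox as [_ [_ [Hinc _]]].
  intros [Hab | ->]; [exact (proj1 (Hinc a b Hab)) | intros t Ht; exact Ht].
Qed.

(* If a were maximal, B a ∈ I would lie properly inside no B b. *)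
Lemma approx_no_max (a : K) : exists b, lt a b.
Proof.
  destruct Happrox as [HBI [_ [_ [_ Hcof]]]].
  destruct (Hcof (B a) (HBI a)) as [b [_ [t [Hbt Hat]]]].
  exists b; apply NNPP; intro Hab.
  exact (Hat (approx_mono b a (not_lt_le b a Hab) t Hbt)).
Qed.

Lemma unbounded_above (A : pset K) :
  ~ bounded lt A -> forall a, exists c, A c /\ lt a c.
Proof.
  intros HA a; destruct (approx_no_max a) as [b Hab].
  apply NNPP; intro Hnone; apply HA; exists b; intros c Hc.
  apply NNPP; intro Hcb; apply Hnone; exists c; split; [exact Hc |].
  exact (lt_le_trans a b c Hab (not_lt_le b c Hcb)).
Qed.

Lemma A_recursive_local_dependence (A : pset K) (f : (K -> K) -> (K -> K)) :
  A_recursive lt I B A f -> ~ bounded lt A ->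
  forall D, I D -> exists E, I E /\
    forall x y, agree_on E x y -> agree_on D (f x) (f y).
Proof.
  intros [H [_ [_ Hrec]]] HA D HD.
  destruct Happrox as [HBI [_ [_ [_ Hcof]]]].
  destruct (Hcof D HD) as [b [HDb _]].
  destruct (unbounded_above A HA b) as [a [HAa Hba]].
  destruct (exists_least (fun c => A c /\ lt a c) (unbounded_above A HA a))
    as [a' [[HAa' Haa'] Hleast]].
  assert (HDa' : subset D (B a')).
  { intros t Ht; apply (approx_mono b a'); [left; exact (lt_le_trans b a a' Hba (or_introl Haa')) |].
    exact (HDb t Ht). }
  assert (Hcompute : forall x t, D t -> H (restrict x (B a)) t = Some (f x t)).
  { intros x t Ht.
    apply (Hrec a a' HAa HAa' Haa' (fun c HAc Hac => Hleast c (conj HAc Hac))).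
    - apply restrict_is_restriction.
    - left; exact (HDa' t Ht). }
  exists (B a); split; [exact (HBI a) |].
  intros x y Hxy t Ht.
  pose proof (Hcompute x t Ht) as Hx; pose proof (Hcompute y t Ht) as Hy.
  rewrite (restrict_agree x y (B a) Hxy), Hy in Hx.
  injection Hx as Hx; symmetry; exact Hx.
Qed.

End Approximation.

End WellOrder.

Theorem fact6p2 (K : Type) (lt : K -> K -> Prop) (I : pset (pset K))
  (B : K -> pset K) (A : pset K) (f : (K -> K) -> (K -> K))
  (Hwo : strict_wellorder lt) (Hcard : is_cardinal lt) (Hunc : uncountable K)
  (Hreg : regular lt)
  (Hideal : is_ideal I) (Hcomp : kappa_complete I) (Hprop : proper_ideal I)
  (Hbdd : contains_bounded lt I) (Hbasis : has_basis_of_size_kappa I)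
  (Happrox : approximation_sequence lt I B)
  (HA : ~ bounded lt A)
  (Hf : A_recursive lt I B A f) :
  tau_continuous I f.
Proof.
  destruct Hideal as [_ [Hdown _]].
  apply (tau_continuous_of_local_dependence K I Hdown).
  exact (A_recursive_local_dependence K lt Hwo I B Happrox A f Hf HA).
Qed.
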